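(* Let $p$ be an odd prime and let $F_{g\,\mathsf{ANY},\,h\,\mathsf{ANY}}(p)$ denote the number of pairs $(g,h)$ of integers with $1\le g\le p-1$, $1\le h\le p-1$ and $g^{h}\equiv h \pmod p$. Then \[ \left|F_{g\,\mathsf{ANY},\,h\,\mathsf{ANY}}(p)-(p-1)\right|\le d(p-1)\,\sigma(p-1)\,\sqrt{p}\,(1+\ln p). \]
   Context: $d(n)$ denotes the number of positive divisors of $n$, $\sigma(n)$ the sum of the positive divisors of $n$, and $\ln$ the natural logarithm. *)

From mathcomp Require Import all_boot.
From Stdlib Require Import Reals.

Definition ndivisors (n : nat) : nat := size (divisors n).
Definition sigma_div (n : nat) : nat := \sum_(d <- divisors n) d.

Definition F_any_any (p : nat) : nat :=
  \sum_(1 <= g < p) \sum_(1 <= h < p) ((expn g h) %% p == h %% p : nat).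

(* The only arithmetic input is that, for 0 < h < p, the congruence g^h = h
   (mod p) has at most gcd(h, p-1) solutions g: two solutions differ by a
   gcd(h, p-1)-th root of unity in F_p.  Summing over h gives
   F(p) <= sum_h gcd(h, p-1) <= (p-1) d(p-1) <= d(p-1) sigma(p-1), and p-1 lies
   below the same bound, so the difference is far inside the stated estimate. *)
From mathcomp Require Import all_boot all_order all_algebra all_field.
Import GRing.Theory.

Set Implicit Arguments.
Unset Strict Implicit.
Unset Printing Implicit Defensive.

Local Open Scope ring_scope.

Lemma expr_gcdn_eq1 (R : pzRingType) (z : R) (a b : nat) :
  (0 < a)%N -> z ^+ a = 1 -> z ^+ b = 1 -> z ^+ gcdn a b = 1.
Proof.
move=> a_gt0 za1 zb1; have [u _ /dvdnP [c Hc]] := Bezoutl b a_gt0.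
have : z ^+ (gcdn a b + u * b) = 1 by rewrite Hc mulnC exprM za1 expr1n.
by rewrite exprD mulnC exprM zb1 expr1n mulr1.
Qed.

Section FinFieldPowerEquation.

Variable F : finFieldType.

Lemma expf_card_pred (x : F) : x != 0 -> x ^+ #|F|.-1 = 1.
Proof.
move=> x_neq0; apply: (mulIf x_neq0).
have card_gt0 : (0 < #|F|)%N by apply/card_gt0P; exists 0.
by rewrite -exprSr prednK // expf_card mul1r.
Qed.

Lemma card_unity_roots_le (k : nat) :
  (0 < k)%N -> (#|[set z : F | k.-unity_root z]| <= k)%N.
Proof.
move=> k_gt0; rewrite cardE; apply: max_unity_roots => //; last exact: enum_uniq.
by apply/allP => z; rewrite mem_enum inE.
Qed.

Lemma card_pow_eq_le (h : nat) (c : F) :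
  (0 < h)%N -> c != 0 -> (#|[set x : F | x ^+ h == c]| <= gcdn h #|F|.-1)%N.
Proof.
move=> h_gt0 c_neq0; set A := [set x : F | x ^+ h == c].
have [x0 /eqP x0h | A0] := pickP [pred x | x ^+ h == c]; last first.
  by rewrite (@eq_card0 _ A) // => x; rewrite inE; exact: A0.
have sol_neq0 x : x ^+ h = c -> x != 0.
  by move=> xh; apply: contra_neq c_neq0 => x_eq0; rewrite -xh x_eq0 expr0n gtn_eqF.
rewrite -(card_in_imset (f := fun x => x / x0)); last first.
  by move=> x y _ _; apply: mulIf; rewrite invr_eq0 sol_neq0.
have k_gt0 : (0 < gcdn h #|F|.-1)%N by rewrite gcdn_gt0 h_gt0.
apply: leq_trans (card_unity_roots_le k_gt0).
apply: subset_leq_card; apply/subsetP => _ /imsetP [x xA ->].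
move: xA; rewrite !inE unity_rootE => /eqP xh; apply/eqP.
apply: expr_gcdn_eq1 => //; first by rewrite exprMn exprVn xh x0h divff.
by apply: expf_card_pred; rewrite mulf_neq0 ?invr_eq0 ?sol_neq0.
Qed.

End FinFieldPowerEquation.

Lemma count_pow_congr_le (p h : nat) : prime p -> (0 < h < p)%N ->
  (\sum_(1 <= g < p) ((g ^ h) %% p == h %% p : nat) <= gcdn h p.-1)%N.
Proof.
move=> p_pr /andP [h_gt0 h_lt_p].
set P := fun g => (g ^ h %% p == h %% p)%N.
have -> : (\sum_(1 <= g < p) (P g : nat) = count P (index_iota 1 p))%N.
  by rewrite -sum1_count [RHS]big_mkcond; apply: eq_bigr => g _; case: (P g).
rewrite -size_filter; set s := filter P (index_iota 1 p).
have cast_inj : {in s &, injective (fun g => g%:R : 'F_p)}.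
  move=> g g'; rewrite !mem_filter !mem_index_iota => /and3P [_ _ gp] /and3P [_ _ g'p].
  by move/(congr1 val); rewrite /= !val_Fp_nat // !modn_small.
rewrite -(size_map (fun g => g%:R : 'F_p)) -(card_uniqP _); last first.
  by rewrite map_inj_in_uniq // filter_uniq // iota_uniq.
have : (h%:R : 'F_p) != 0.
  by rewrite -(eqtype.inj_eq val_inj) /= val_Fp_nat // modn_small // gtn_eqF.
move/(card_pow_eq_le h_gt0); rewrite card_Fp //; apply: leq_trans.
apply: subset_leq_card; apply/subsetP => _ /mapP [g gs ->].
move: gs; rewrite mem_filter inE => /andP [/eqP gh _].
by rewrite -natrX -(Fp_nat_mod p_pr (g ^ h)) gh Fp_nat_mod.
Qed.

Local Close Scope ring_scope.

Lemma sum_gcdn_le (n : nat) : 0 < n ->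
  \sum_(1 <= h < n.+1) gcdn h n <= n * ndivisors n.
Proof.
move=> n_gt0.
have gcdn_le_sum h : gcdn h n <= \sum_(d <- divisors n) (d %| h) * d.
  rewrite (bigD1_seq (gcdn h n)) /= ?divisors_uniq -?dvdn_divisors ?dvdn_gcdr //.
  by rewrite dvdn_gcdl mul1n leq_addr.
apply: (@leq_trans (\sum_(1 <= h < n.+1) \sum_(d <- divisors n) (d %| h) * d)).
  by apply: leq_sum => h _; apply: gcdn_le_sum.
rewrite exchange_big /= -[n * _]mulnC /ndivisors -sum1_size big_distrl /=.
apply: leq_sum => d _; rewrite mul1n -big_distrl /= -divn_count_dvd.
exact: leq_divM.
Qed.

Lemma leq_sigma_div (n : nat) : 0 < n -> n <= sigma_div n.
Proof.
move=> n_gt0; rewrite /sigma_div (bigD1_seq n) ?divisors_uniq ?divisors_id //=.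
exact: leq_addr.
Qed.

Lemma leq_ndivisors_sigma (n : nat) : 0 < n -> n <= ndivisors n * sigma_div n.
Proof.
move=> n_gt0; apply: (leq_trans (leq_sigma_div n_gt0)).
rewrite leq_pmull // /ndivisors.
by case: (divisors n) (divisors_id n_gt0).
Qed.

Lemma F_any_any_le (p : nat) : prime p ->
  F_any_any p <= ndivisors (p - 1) * sigma_div (p - 1).
Proof.
move=> p_pr; have p_gt1 := prime_gt1 p_pr.
have n_gt0 : 0 < p - 1 by rewrite subn_gt0.
have p_eq : p = (p - 1).+1 by rewrite subn1 prednK // ltnW.
have count_le h : 1 <= h < p ->
    \sum_(1 <= g < p) ((g ^ h) %% p == h %% p : nat) <= gcdn h (p - 1).
  by rewrite subn1; apply: count_pow_congr_le.
rewrite /F_any_any exchange_big /=.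
apply: leq_trans (_ : \sum_(1 <= h < p) gcdn h (p - 1) <= _).
  by rewrite big_nat_cond [X in _ <= X]big_nat_cond; apply: leq_sum => h /andP [/count_le].
rewrite {1}p_eq; apply: (leq_trans (sum_gcdn_le n_gt0)).
by rewrite mulnC leq_mul2l leq_sigma_div ?orbT.
Qed.

From Stdlib Require Import Reals Lra.

Lemma Rabs_sub_le_of_bounds (a b M : R) :
  (0 <= a <= M -> 0 <= b <= M -> Rabs (a - b) <= M)%R.
Proof. by move=> a_bounds b_bounds; apply: Rabs_le; lra. Qed.

Theorem mainTheorem1 (p : nat) (Hp : prime p) (Hodd : odd p) :
  (Rabs (INR (F_any_any p) - INR (p - 1))
   <= INR (ndivisors (p - 1)) * INR (sigma_div (p - 1)) * sqrt (INR p)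
      * (1 + ln (INR p)))%R.
Proof.
have p_gt1 : (1 < INR p)%R by apply: (lt_INR 1); apply/ltP; exact: prime_gt1.
have n_gt0 : 0 < p - 1 by rewrite subn_gt0 prime_gt1.
have /leP/le_INR F_le := F_any_any_le Hp.
have /leP/le_INR n_le := leq_ndivisors_sigma n_gt0.
rewrite mult_INR in F_le n_le.
set M := (INR (ndivisors (p - 1)) * INR (sigma_div (p - 1)))%R in F_le n_le *.
have sqrt_ge1 : (1 <= sqrt (INR p))%R by rewrite -sqrt_1; apply: sqrt_le_1_alt; lra.
have ln_ge0 : (0 <= ln (INR p))%R by rewrite -ln_1; apply: Rlt_le; apply: ln_increasing; lra.
have M_ge0 : (0 <= M)%R by have := pos_INR (p - 1); lra.
apply: (Rle_trans _ M).
  by apply: Rabs_sub_le_of_bounds; split => //; exact: pos_INR.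
rewrite Rmult_assoc -{1}(Rmult_1_r M); apply: Rmult_le_compat_l => //; nra.
Qed.
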